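(* Let $\mathbf A$ be a real symmetric positive definite matrix indexed by the mesh $\mathcal M$, in the FIND setting described in the context. Then for every leaf cluster $\mathcal C_r$ of $\mathcal T$, every consistent ordering of $\mathcal T_r^+$ and every node $g$ of $\mathcal T_r^+$, the matrix $\mathcal U_g=\mathbf A_g(\mathcal B_g,\mathcal B_g)-\mathbf A_g(\mathcal B_g,\mathcal S_g)\mathbf A_g(\mathcal S_g,\mathcal S_g)^{-1}\mathbf A_g(\mathcal S_g,\mathcal B_g)$ is positive definite.
   Context: Setting (FIND). $\mathcal M$ is a finite set of mesh nodes and $\mathbf A$ is a matrix with rows and columns indexed by $\mathcal M$, structurally symmetric ($A_{ij}\neq 0\iff A_{ji}\neq 0$). For a matrix $\mathbf X$ and $X,Y\subseteq\mathcal M$, $\mathbf X(X,Y)$ is the submatrix with rows in $X$ and columns in $Y$. For a cluster $\mathcal C\subseteq\mathcal M$, its boundary set is $\mathcal B_{\mathcal C}=\{i\in\mathcal C: A_{ij}\neq 0\text{ for some } j\notin\mathcal C\}$ and its inner set is $\mathcal I_{\mathcal C}=\mathcal C\setminus\mathcal B_{\mathcal C}$; for a cluster $\mathcal C_g$ write $\mathcal B_g,\mathcal I_g$. Cluster tree: $\mathcal T$ is a rooted binary tree of clusters with root $\mathcal M$, each non-leaf cluster the disjoint union of its two children. For a leaf $\mathcal C_r$, let $r=a_0,\dots,a_d$ be the path to the root and $b_k$ the sibling of $a_k$. The augmented tree $\mathcal T_r^+$ has root $\mathcal C_{-r}=\mathcal M\setminus\mathcal C_r$; for $0\le k\le d-2$,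 $\mathcal C_{-a_k}=\mathcal M\setminus\mathcal C_{a_k}$ has children $\mathcal C_{b_k}$ and $\mathcal C_{-a_{k+1}}$, where $\mathcal C_{-a_{d-1}}$ is identified with $\mathcal C_{b_{d-1}}$ (equal sets); each basic cluster $\mathcal C_{b_k}$ carries its subtree from $\mathcal T$. Private inner nodes: $\mathcal S_g=\mathcal I_g$ for a leaf $g$ of $\mathcal T_r^+$, and $\mathcal S_g=\mathcal I_g\setminus(\mathcal I_i\cup\mathcal I_j)$ if $g$ has children $i,j$. Consistent ordering: a total order $g_1,\dots,g_m$ of the nodes of $\mathcal T_r^+$ with every node after all its descendants. Elimination: $\mathbf A_{g_1}=\mathbf A$; for each $g$, $\mathcal L_g=\mathbf A_g(\mathcal B_g,\mathcal S_g)\mathbf A_g(\mathcal S_g,\mathcal S_g)^{-1}$, $\mathbf L_g$ is the identity on $\mathcal M$ except $\mathbf L_g(\mathcal B_g,\mathcal S_g)=\mathcal L_g$, $\mathbf A_{g+}=\mathbf L_g^{-1}\mathbf A_g$, and $\mathbf A_{g_{t+1}}=\mathbf A_{g_t+}$ (block Gaussian elimination of the columns $\mathcal S_g$). *)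

From HB Require Import structures.
From mathcomp Require Import all_boot all_order all_algebra.
Set Implicit Arguments. Unset Strict Implicit. Unset Printing Implicit Defensive.
Import Order.TTheory GRing.Theory Num.Theory.
Local Open Scope ring_scope.

(* The mesh M is modelled as 'I_n; matrices indexed by M are 'M[R]_n. *)

Section FIND.
Variable R : realFieldType.
Variable n : nat.

Definition selmx (X : {set 'I_n}) : 'M[R]_(n, #|X|) :=
  \matrix_(i, a) (i == enum_val a)%:R.

(* Submatrix X(Y, Z) (rows in Y, columns in Z, in enumeration order). *)
Definition submxS (Y Z : {set 'I_n}) (X : 'M[R]_n) : 'M[R]_(#|Y|, #|Z|) :=
  \matrix_(a, b) X (enum_val a) (enum_val b).

Definition symmetric_mx (m : nat) (M : 'M[R]_m) : Prop := M^T = M.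

Definition posdef_mx (m : nat) (M : 'M[R]_m) : Prop :=
  forall v : 'cV[R]_m, v != 0 -> 0 < (v^T *m M *m v) 0 0.

Definition bnd (A : 'M[R]_n) (C : {set 'I_n}) : {set 'I_n} :=
  [set i in C | [exists j, (j \notin C) && (A i j != 0)]].
Definition inner (A : 'M[R]_n) (C : {set 'I_n}) : {set 'I_n} := C :\: bnd A C.

Inductive ctree := CLeaf of {set 'I_n} | CNode of {set 'I_n} & ctree & ctree.

Definition cset (t : ctree) : {set 'I_n} :=
  match t with CLeaf C => C | CNode C _ _ => C end.

Fixpoint ctree_wf (t : ctree) : Prop :=
  match t with
  | CLeaf _ => True
  | CNode C l r => [/\ C = cset l :|: cset r, [disjoint cset l & cset r],
                       ctree_wf l & ctree_wf r]
  end.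

Definition cluster_tree (t : ctree) : Prop := cset t = setT /\ ctree_wf t.

(* Nodes are addressed by paths from the root (false = left, true = right). *)
Fixpoint positions (t : ctree) : seq (seq bool) :=
  match t with
  | CLeaf _ => [:: [::]]
  | CNode _ l r => [::] :: (map (cons false) (positions l) ++ map (cons true) (positions r))
  end.

Fixpoint subt (t : ctree) (p : seq bool) : option ctree :=
  match p, t with
  | [::], _ => Some t
  | b :: p', CNode _ l r => subt (if b then r else l) p'
  | _ :: _, CLeaf _ => None
  end.

(* Augmented tree T_r^+ for the leaf of t reached by the path p.
   O is the (already built) tree for C_{-a_{k+1}} (None at the root of T).
   Returns None if p does not address a leaf of t. *)
Fixpoint augT (t : ctree) (p : seq bool) (O : option ctree) : option ctree :=
  match p, t with
  | [::], CLeaf C =>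
      Some (match O with None => CLeaf (~: C) | Some o => o end)
  | b :: p', CNode _ l r =>
      let a := if b then r else l in
      let s := if b then l else r in
      augT a p' (Some (match O with
                       | None => s   (* C_{-a_{d-1}} identified with C_{b_{d-1}} *)
                       | Some o => CNode (~: cset a) s o
                       end))
  | _, _ => None
  end.

Definition augmented_tree (t : ctree) (p : seq bool) : option ctree := augT t p None.

Definition consistent_ordering (tr : ctree) (ord : seq (seq bool)) : Prop :=
  perm_eq ord (positions tr) /\
  forall g h, g \in positions tr -> h \in positions tr ->
    prefix g h -> g != h -> (index h ord < index g ord)%N.

Definition clus (tr : ctree) (g : seq bool) : {set 'I_n} :=
  match subt tr g with Some t => cset t | None => set0 end.

Definition Bset (A : 'M[R]_n) (tr : ctree) (g : seq bool) := bnd A (clus tr g).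

Definition Sset (A : 'M[R]_n) (tr : ctree) (g : seq bool) : {set 'I_n} :=
  match subt tr g with
  | Some (CLeaf C) => inner A C
  | Some (CNode C l r) => inner A C :\: (inner A (cset l) :|: inner A (cset r))
  | None => set0
  end.

Definition Lsmall (A : 'M[R]_n) (tr : ctree) (g : seq bool) (X : 'M[R]_n)
  : 'M[R]_(#|Bset A tr g|, #|Sset A tr g|) :=
  submxS (Bset A tr g) (Sset A tr g) X *m invmx (submxS (Sset A tr g) (Sset A tr g) X).

Definition Lmat (A : 'M[R]_n) (tr : ctree) (g : seq bool) (X : 'M[R]_n) : 'M[R]_n :=
  \matrix_(i, j)
    if (i \in Bset A tr g) && (j \in Sset A tr g)
    then (selmx (Bset A tr g) *m Lsmall A tr g X *m (selmx (Sset A tr g))^T) i j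
    else (i == j)%:R.

Definition elim_step (A : 'M[R]_n) (tr : ctree) (X : 'M[R]_n) (g : seq bool) : 'M[R]_n :=
  invmx (Lmat A tr g X) *m X.

(* A_{g_t}: the matrix before eliminating the t-th node of the ordering. *)
Definition Acur (A : 'M[R]_n) (tr : ctree) (ord : seq (seq bool)) (t : nat) : 'M[R]_n :=
  foldl (elim_step A tr) A (take t ord).

Definition Ug (A : 'M[R]_n) (tr : ctree) (g : seq bool) (X : 'M[R]_n)
  : 'M[R]_(#|Bset A tr g|) :=
  let B := Bset A tr g in let S := Sset A tr g in
  submxS B B X - submxS B S X *m invmx (submxS S S X) *m submxS S B X.

End FIND.

From HB Require Import structures.
From mathcomp Require Import all_boot all_order all_algebra.
Set Implicit Arguments. Unset Strict Implicit. Unset Printing Implicit Defensive.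
Import Order.TTheory GRing.Theory Num.Theory.
Local Open Scope ring_scope.

(* Let D_t be the set of indices not yet eliminated before step t.  Along the
   ordering, A_{g_t} keeps three properties: (1) its rows D_t are P(D_t, :) A for
   some P with P(D_t, D_t) = 1; (2) its block (D_t, ~D_t) vanishes; (3) the inner
   columns of every cluster still to be processed vanish outside that cluster.
   By (1) and (2), v^T A_{g_t}(Q, Q) v = w^T A w with w <> 0 whenever v <> 0 and
   Q is contained in D_t, so those principal blocks are positive definite; in
   particular A_g(S_g, S_g) is invertible.  By (3), the consistency of the
   ordering and the disjointness of the sets S_g, the rows of D_t meeting the
   pivot columns S_g lie in S_g or B_g, which makes (1)-(3) survive the step.
   Finally U_g is the block (B_g, B_g) of A_{g+}, with B_g inside D_{t+1}. *)

Section SetProjection.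
Variables (R : realFieldType) (n : nat).
Implicit Types X Y : {set 'I_n}.

Definition setproj X : 'M[R]_n := \matrix_(i, j) ((i == j) && (i \in X))%:R.

Lemma sum_pred1_natl (F : 'I_n -> R) k : \sum_i (i == k)%:R * F i = F k.
Proof.
rewrite (bigD1 k) //= eqxx mul1r big1 ?addr0 // => i /negbTE ->; exact: mul0r.
Qed.

Lemma sum_pred1_natr (F : 'I_n -> R) k : \sum_i F i * (i == k)%:R = F k.
Proof. by rewrite -[RHS]sum_pred1_natl; apply: eq_bigr => i _; rewrite mulrC. Qed.

Lemma setproj_mulmxE m X (Y : 'M[R]_(n, m)) i j :
  (setproj X *m Y) i j = (i \in X)%:R * Y i j.
Proof.
rewrite mxE (bigD1 i) //= big1 ?addr0; first by rewrite mxE eqxx.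
by move=> k /negbTE nk; rewrite mxE eq_sym nk mul0r.
Qed.

Lemma mulmx_setprojE m X (Y : 'M[R]_(m, n)) i j :
  (Y *m setproj X) i j = Y i j * (j \in X)%:R.
Proof.
rewrite mxE (bigD1 j) //= big1 ?addr0; first by rewrite mxE eqxx.
by move=> k /negbTE nk; rewrite mxE nk mulr0.
Qed.

Lemma trmx_setproj X : (setproj X)^T = setproj X.
Proof. by apply/matrixP=> i j; rewrite !mxE eq_sym; case: eqP => // ->. Qed.

Lemma setprojM X Y : setproj X *m setproj Y = setproj (X :&: Y).
Proof.
apply/matrixP=> i j; rewrite setproj_mulmxE !mxE inE.
by case: (i \in X); case: eqP => // _; rewrite ?mul1r ?mul0r.
Qed.

Lemma setproj_subl X Y : X \subset Y -> setproj X *m setproj Y = setproj X.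
Proof. by move=> sXY; rewrite setprojM (setIidPl sXY). Qed.

Lemma setproj_subr X Y : X \subset Y -> setproj Y *m setproj X = setproj X.
Proof. by move=> sXY; rewrite setprojM setIC (setIidPl sXY). Qed.

Lemma setproj0 : setproj set0 = 0.
Proof. by apply/matrixP=> i j; rewrite !mxE inE andbF. Qed.

Lemma setprojT : setproj setT = 1%:M.
Proof. by apply/matrixP=> i j; rewrite !mxE inE andbT. Qed.

Lemma setprojC X : setproj (~: X) = 1%:M - setproj X.
Proof.
apply/matrixP=> i j; rewrite !mxE inE.
by case: eqP => [->|]; case: (j \in X); rewrite ?subrr ?subr0.
Qed.

Lemma tr_selmx_mul X : (selmx R X)^T *m selmx R X = 1%:M.
Proof.
apply/matrixP=> a b; rewrite mxE.
under eq_bigr do rewrite !mxE.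
by rewrite sum_pred1_natl !mxE (inj_eq enum_val_inj) eq_sym.
Qed.

Lemma selmx_mul_tr X : selmx R X *m (selmx R X)^T = setproj X.
Proof.
apply/matrixP=> i j; rewrite !mxE.
under eq_bigr do rewrite !mxE.
case: (boolP (i \in X)) => iX; last first.
  rewrite andbF big1 // => a _.
  by case: eqP => [ei|_]; [rewrite ei enum_valP in iX | rewrite mul0r].
rewrite andbT (bigD1 (enum_rank_in iX i)) //= enum_rankK_in // eqxx mul1r.
rewrite big1 ?addr0 1?eq_sym // => a na.
case: eqP => [ei|]; rewrite ?mul0r //.
by case/eqP: na; apply: enum_val_inj; rewrite enum_rankK_in.
Qed.

Lemma setproj_selmx X Y : X \subset Y -> setproj Y *m selmx R X = selmx R X.
Proof.
move=> sXY; apply/matrixP=> i a; rewrite setproj_mulmxE mxE.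
case: eqP => [->|]; last by rewrite mulr0.
by rewrite (subsetP sXY _ (enum_valP a)) mul1r.
Qed.

Lemma tr_selmx_setproj X Y : X \subset Y -> (selmx R X)^T *m setproj Y = (selmx R X)^T.
Proof. by move=> sXY; rewrite -trmx_setproj -trmx_mul setproj_selmx. Qed.

Lemma submxSE Y Z (X : 'M[R]_n) : submxS Y Z X = (selmx R Y)^T *m X *m selmx R Z.
Proof.
apply/matrixP=> a b; rewrite [RHS]mxE.
under [RHS]eq_bigr do rewrite [selmx R Z _ b]mxE.
rewrite sum_pred1_natr [RHS]mxE.
under [RHS]eq_bigr do rewrite [(selmx R Y)^T a _]mxE [selmx R Y _ a]mxE.
by rewrite sum_pred1_natl mxE.
Qed.

Lemma tr_selmx_mul_disjoint X Y :
  [disjoint X & Y] -> (selmx R X)^T *m selmx R Y = 0.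
Proof.
move=> dXY; apply/matrixP=> a b; rewrite [RHS]mxE mxE.
under eq_bigr do rewrite !mxE.
rewrite sum_pred1_natl; case: eqP => // e.
by have := disjointFr dXY (enum_valP a); rewrite e enum_valP.
Qed.

Lemma selmx_mul_row0 m X (W : 'M[R]_(#|X|, m)) i k :
  i \notin X -> (selmx R X *m W) i k = 0.
Proof.
move=> iX; rewrite mxE big1 // => a _; rewrite mxE.
by case: eqP => [ei|_]; [rewrite ei enum_valP in iX | rewrite mul0r].
Qed.

Lemma mul_tr_selmx_col0 m X (W : 'M[R]_(m, #|X|)) i k :
  k \notin X -> (W *m (selmx R X)^T) i k = 0.
Proof.
move=> kX; rewrite mxE big1 // => a _; rewrite !mxE.
by case: eqP => [ei|_]; [rewrite ei enum_valP in kX | rewrite mulr0].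
Qed.

End SetProjection.

Section EliminationStep.
Variables (R : realFieldType) (n : nat).
Local Notation M := 'M[R]_n.
Implicit Types (B S : {set 'I_n}) (X : M).

Definition elim_corr B S X : M :=
  selmx R B *m (submxS B S X *m invmx (submxS S S X)) *m (selmx R S)^T.

Definition elim_mx B S X : M := \matrix_(i, j)
  if (i \in B) && (j \in S) then elim_corr B S X i j else (i == j)%:R.

Definition schur B S X : 'M[R]_#|B| :=
  submxS B B X - submxS B S X *m invmx (submxS S S X) *m submxS S B X.

Variables (B S : {set 'I_n}) (X : M).
Local Notation N := (elim_corr B S X).

Lemma elim_corr_row0 i k : i \notin B -> N i k = 0.
Proof. by move=> iB; rewrite /elim_corr -mulmxA selmx_mul_row0. Qed.

Lemma elim_corr_col0 i k : k \notin S -> N i k = 0.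
Proof. by move=> kS; rewrite /elim_corr mul_tr_selmx_col0. Qed.

Lemma elim_corr_setproj : N *m setproj R S = N.
Proof. by rewrite /elim_corr -mulmxA tr_selmx_setproj. Qed.

Lemma elim_corr_mulmx_setproj : submxS S S X \in unitmx ->
  N *m X *m setproj R S = setproj R B *m X *m setproj R S.
Proof.
move=> uSS; rewrite -!selmx_mul_tr /elim_corr !mulmxA.
rewrite -[_ *m (selmx R S)^T *m X *m selmx R S](mulmxA _ _ (selmx R S)).
rewrite -[_ *m (selmx R S)^T *m (X *m selmx R S)](mulmxA _ _ (X *m selmx R S)).
rewrite [(selmx R S)^T *m (X *m selmx R S)]mulmxA -submxSE.
rewrite -[_ *m invmx _ *m submxS S S X](mulmxA _ (invmx _)) mulVmx // mulmx1.
by rewrite submxSE !mulmxA.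
Qed.

Hypothesis dBS : [disjoint B & S].

Lemma elim_mxE : elim_mx B S X = 1%:M + N.
Proof.
apply/matrixP=> i j; rewrite [LHS]mxE [RHS]mxE [_%:M _ _]mxE.
case: (boolP (i \in B)) => iB /=; last by rewrite elim_corr_row0 // addr0.
case: (boolP (j \in S)) => jS /=; last by rewrite elim_corr_col0 // addr0.
case: eqP => [eij|]; last by rewrite add0r.
by have := disjointFr dBS iB; rewrite eij jS.
Qed.

Lemma elim_corr_sqr : N *m N = 0.
Proof.
have SN : (selmx R S)^T *m N = 0.
  by rewrite /elim_corr !mulmxA tr_selmx_mul_disjoint 1?disjoint_sym // !mul0mx.
by rewrite {1}/elim_corr -mulmxA SN mulmx0.
Qed.

Lemma invmx_elim_mx : invmx (elim_mx B S X) = 1%:M - N.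
Proof.
have LN : elim_mx B S X *m (1%:M - N) = 1%:M.
  by rewrite elim_mxE mulmxDl mul1mx mulmxBr mulmx1 elim_corr_sqr subr0 subrK.
have [uL _] := mulmx1_unit LN.
by have := mulKmx uL (1%:M - N); rewrite LN mulmx1.
Qed.

Lemma elim_mulmxE : invmx (elim_mx B S X) *m X = X - N *m X.
Proof. by rewrite invmx_elim_mx mulmxBl mul1mx. Qed.

Lemma schur_elim : schur B S X = submxS B B (invmx (elim_mx B S X) *m X).
Proof.
rewrite elim_mulmxE [RHS]submxSE mulmxBr mulmxBl -submxSE; congr (_ - _).
by rewrite /elim_corr !mulmxA tr_selmx_mul mul1mx (submxSE S B) !mulmxA.
Qed.

Lemma elim_mulmx_entry i j :
  (invmx (elim_mx B S X) *m X) i j = X i j - \sum_k N i k * X k j.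
Proof. by rewrite elim_mulmxE !mxE. Qed.

Lemma elim_mulmx_row i j : i \notin B -> (invmx (elim_mx B S X) *m X) i j = X i j.
Proof.
move=> iB; rewrite elim_mulmx_entry big1 ?subr0 // => k _.
by rewrite elim_corr_row0 // mul0r.
Qed.

Lemma elim_mulmx_col i j : (forall k, k \in S -> X k j = 0) ->
  (invmx (elim_mx B S X) *m X) i j = X i j.
Proof.
move=> XSj0; rewrite elim_mulmx_entry big1 ?subr0 // => k _.
by case: (boolP (k \in S)) => kS; [rewrite XSj0 ?mulr0 | rewrite elim_corr_col0 ?mul0r].
Qed.

End EliminationStep.

Section ReducedRows.
Variables (R : realFieldType) (n : nat).
Local Notation M := 'M[R]_n.
Implicit Types (A X : M) (B S D Q : {set 'I_n}).

Definition reduced_rows A D X := exists P,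
  setproj R D *m X = setproj R D *m P *m A /\
  setproj R D *m P *m setproj R D = setproj R D.

Definition cross_block0 D X := forall i j, i \in D -> j \notin D -> X i j = 0.

Lemma setproj_cross_block0 D X :
  cross_block0 D X -> setproj R D *m X *m setproj R (~: D) = 0.
Proof.
move=> XD0; apply/matrixP=> i j; rewrite mulmx_setprojE setproj_mulmxE mxE inE.
case: (boolP (i \in D)) => iD; last by rewrite !mul0r.
case: (boolP (j \in D)) => jD; first by rewrite mulr0.
by rewrite XD0 // mulr0 mul0r.
Qed.

(* For u supported in D and w := P^T u, one has u^T X u = w^T A w and u = 0 when w = 0. *)
Lemma posdef_submxS_reduced A D X Q : posdef_mx A ->
  reduced_rows A D X -> cross_block0 D X -> Q \subset D ->
  posdef_mx (submxS Q Q X).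
Proof.
move=> pdA [P [XPA PDD]] XD0 sQD v nv.
set u := selmx R Q *m v.
have Du : setproj R D *m u = u by rewrite /u mulmxA setproj_selmx.
have vXv : v^T *m submxS Q Q X *m v = u^T *m X *m u.
  by rewrite submxSE /u trmx_mul !mulmxA.
have uv : (selmx R Q)^T *m u = v by rewrite /u mulmxA tr_selmx_mul mul1mx.
clearbody u.
have uD : u^T *m setproj R D = u^T.
  by have := congr1 trmx Du; rewrite trmx_mul trmx_setproj.
set w := P^T *m u.
have Dw : setproj R D *m w = u.
  have := congr1 trmx PDD; rewrite !trmx_mul !trmx_setproj mulmxA => PDD'.
  by rewrite /w -{1}Du !mulmxA PDD' Du.
have DXuw : setproj R D *m X *m u = setproj R D *m X *m w.
  have -> : w = setproj R D *m w + setproj R (~: D) *m w.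
    by rewrite setprojC mulmxBl mul1mx addrC subrK.
  by rewrite mulmxDr Dw mulmxA setproj_cross_block0 // mul0mx addr0.
have uXu : u^T *m X *m u = w^T *m A *m w.
  rewrite -uD -!mulmxA [setproj R D *m (X *m u)]mulmxA DXuw XPA !mulmxA uD.
  by rewrite /w trmx_mul trmxK.
rewrite vXv uXu; apply: pdA; apply: contraNneq nv => w0.
by rewrite -uv -Dw w0 !mulmx0.
Qed.

Lemma posdef_unitmx m (K : 'M[R]_m) : posdef_mx K -> K \in unitmx.
Proof.
move=> pdK; rewrite unitmxE unitfE; apply/negP => /det0P [v nv vK].
suff : v^T != 0 by move/pdK; rewrite trmxK vK mul0mx mxE ltxx.
by apply: contraNneq nv => e; rewrite -[v]trmxK e trmx0.
Qed.

Lemma reduced_rows_elim A D B S X : [disjoint B & S] -> S \subset D ->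
  reduced_rows A D X ->
  reduced_rows A (D :\: S) (invmx (elim_mx B S X) *m X).
Proof.
move=> dBS sSD [P [XPA PDD]].
have sD'D : D :\: S \subset D by apply: subsetDl.
set N := elim_corr B S X.
have NS : N *m setproj R S = N := elim_corr_setproj B S X.
have NX : N *m X = N *m P *m A.
  by rewrite -NS -(setproj_subl R sSD) -!mulmxA XPA !mulmxA.
have D'X : setproj R (D :\: S) *m X = setproj R (D :\: S) *m P *m A.
  by rewrite -(setproj_subl R sD'D) -!mulmxA XPA !mulmxA.
have pDD' : setproj R D *m setproj R (D :\: S) = setproj R (D :\: S).
  exact: setproj_subr.
have pD'D : setproj R (D :\: S) *m setproj R D = setproj R (D :\: S).
  exact: setproj_subl.
have D'PD' : setproj R (D :\: S) *m P *m setproj R (D :\: S) = setproj R (D :\: S).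
  transitivity (setproj R (D :\: S) *m (setproj R D *m P *m setproj R D)
                  *m setproj R (D :\: S)).
    by rewrite !mulmxA pD'D -!mulmxA pDD'.
  by rewrite PDD pD'D setprojM setIid.
have ND : N *m setproj R D = N by rewrite -NS -mulmxA setproj_subl.
have NPD' : N *m P *m setproj R (D :\: S) = 0.
  transitivity (N *m (setproj R D *m P *m setproj R D) *m setproj R (D :\: S)).
    by rewrite !mulmxA ND -!mulmxA pDD'.
  rewrite PDD ND -NS -mulmxA setprojM.
  have -> : S :&: (D :\: S) = set0.
    by apply/setP => x; rewrite !inE; case: (x \in S); rewrite ?andbF.
  by rewrite setproj0 mulmx0.
exists ((1%:M - N) *m P); split.
- by rewrite (elim_mulmxE _ dBS) mulmxBr NX D'X mulmxBl mul1mx mulmxBr mulmxBl !mulmxA.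
- by rewrite mulmxBl mul1mx mulmxBr mulmxBl D'PD' -mulmxA NPD' mulmx0 subr0.
Qed.

Lemma cross_block0_elim D B S X : [disjoint B & S] -> S \subset D ->
  cross_block0 D X ->
  (forall i j, i \in D -> i \notin S -> i \notin B -> j \in S -> X i j = 0) ->
  submxS S S X \in unitmx ->
  cross_block0 (D :\: S) (invmx (elim_mx B S X) *m X).
Proof.
move=> dBS sSD XD0 XS0 uSS i j; rewrite !inE negb_and negbK => /andP [iS iD] jD'.
case: (boolP (j \in D)) => jD; last first.
  rewrite (elim_mulmx_col dBS); first exact: XD0.
  by move=> k kS; rewrite XD0 // (subsetP sSD).
rewrite jD orbF in jD'.
case: (boolP (i \in B)) => iB; last by rewrite (elim_mulmx_row _ dBS) // XS0.
have := congr1 (fun Y : 'M[R]_n => Y i j) (elim_corr_mulmx_setproj B uSS).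
rewrite /= !mulmx_setprojE !setproj_mulmxE jD' iB mulr1 mul1r mulr1 => NXij.
by rewrite (elim_mulmxE _ dBS) mxE mxE NXij subrr.
Qed.

End ReducedRows.

Section ClusterTrees.
Variables (R : realFieldType) (n : nat) (A : 'M[R]_n).
Implicit Types (t s : ctree n) (g h q : seq bool) (C X Y : {set 'I_n}).

Definition private_inner s : {set 'I_n} :=
  match s with
  | CLeaf C => inner A C
  | CNode C l r => inner A C :\: (inner A (cset l) :|: inner A (cset r))
  end.

Lemma SsetE t g : Sset A t g = if subt t g is Some s then private_inner s else set0.
Proof. by rewrite /Sset; case: (subt t g) => // -[]. Qed.

Lemma subt_nil t : subt t [::] = Some t.
Proof. by case: t. Qed.

Lemma subt_cat t g q : subt t (g ++ q) = obind (fun s => subt s q) (subt t g).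
Proof. by elim: g t => [|b g IH] [C|C l r] //=. Qed.

Lemma mem_map_cons (b c : bool) h (s : seq (seq bool)) :
  (b :: h \in map (cons c) s) = (b == c) && (h \in s).
Proof. by apply/mapP/andP => [[h' hs [-> ->]]|[/eqP -> hs]]; last exists h. Qed.

Lemma mem_positions t h : (h \in positions t) = isSome (subt t h).
Proof.
elim: t h => [C|C l IHl r IHr] [|b h] //=.
by rewrite in_cons mem_cat !mem_map_cons; case: b; rewrite /= ?IHl ?IHr ?orbF.
Qed.

Lemma uniq_positions t : uniq (positions t).
Proof.
elim: t => [C|C l IHl r IHr] //=.
rewrite mem_cat negb_or cat_uniq !map_inj_uniq ?IHl ?IHr; try by move=> x y [].
apply/and4P; split=> //.
- by apply/andP; split; apply/negP => /mapP [y _ e].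
by apply/hasPn => x /mapP [y _ ->]; apply/negP => /mapP [z _ e].
Qed.

Lemma ctree_wf_subt t g s : ctree_wf t -> subt t g = Some s -> ctree_wf s.
Proof.
elim: g t => [|b g IH] t; first by rewrite subt_nil => wt [<-].
by case: t => // C l r [_ _ wl wr]; case: b; [exact: IH wr | exact: IH wl].
Qed.

Lemma cset_subt t g s : ctree_wf t -> subt t g = Some s -> cset s \subset cset t.
Proof.
elim: g t => [|b g IH] t; first by rewrite subt_nil => wt [<-].
case: t => // C l r [-> _ wl wr]; case: b => /= e.
  exact: subset_trans (IH _ wr e) (subsetUr _ _).
exact: subset_trans (IH _ wl e) (subsetUl _ _).
Qed.

Lemma subt_prefix_or_disjoint t g h sg sh : ctree_wf t ->
  subt t g = Some sg -> subt t h = Some sh ->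
  [|| prefix g h, prefix h g | [disjoint cset sg & cset sh]].
Proof.
elim: g t h => [|b g IH] t h; first by rewrite prefix0s.
case: h => [|b' h]; first by rewrite prefix0s orbT.
case: t => // C l r /= [_ dlr wl wr] eg eh.
case: (boolP (b == b')) => [/eqP e|nbb] /=.
  subst b'; rewrite !eqxx /=.
  by case: b eg eh => eg eh; [exact: IH wr eg eh | exact: IH wl eg eh].
rewrite eq_sym (negbTE nbb) /=.
have wb (c : bool) : ctree_wf (if c then r else l) by case: c.
have {}dlr : [disjoint cset (if b then r else l) & cset (if b' then r else l)].
  by case: b b' nbb {eg eh} => -[] //= _; rewrite disjoint_sym.
exact: disjointWl (cset_subt (wb b) eg) (disjointWr (cset_subt (wb b') eh) dlr).
Qed.

Lemma inner_sub C : inner A C \subset C.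
Proof. exact: subsetDl. Qed.

Lemma bnd_sub C : bnd A C \subset C.
Proof. by apply/subsetP => x; rewrite inE => /andP []. Qed.

Lemma disjoint_bnd_inner C : [disjoint bnd A C & inner A C].
Proof.
rewrite -setI_eq0; apply/eqP/setP => x.
by rewrite inE [x \in inner _ _]inE in_set0; case: (x \in bnd A C).
Qed.

Lemma innerS X Y : X \subset Y -> inner A X \subset inner A Y.
Proof.
move=> sXY; apply/subsetP => x; rewrite !inE negb_and => /andP [h xX].
rewrite (subsetP sXY _ xX) andbT; move: h; rewrite xX /=.
apply: contra => /existsP [j /andP [jY Ajx]]; apply/existsP; exists j.
by rewrite Ajx andbT; exact: contra (subsetP sXY j) jY.
Qed.

Lemma private_inner_sub s : private_inner s \subset inner A (cset s).
Proof. by case: s => [C|C l r] //=; apply: subsetDl. Qed.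

Lemma inner_private_subt s j : j \in inner A (cset s) ->
  exists q s', subt s q = Some s' /\ j \in private_inner s'.
Proof.
elim: s => [C|C l IHl r IHr] /= jC; first by exists [::], (CLeaf C).
case: (boolP (j \in inner A (cset l))) => [/IHl [q [s' [e js]]]|jl].
  by exists (false :: q), s'.
case: (boolP (j \in inner A (cset r))) => [/IHr [q [s' [e js]]]|jr].
  by exists (true :: q), s'.
by exists [::], (CNode C l r); split => //=; rewrite in_setD in_setU negb_or jl jr.
Qed.

Lemma disjoint_private_inner_cat t g q sg sh : ctree_wf t -> q != [::] ->
  subt t g = Some sg -> subt t (g ++ q) = Some sh ->
  [disjoint private_inner sg & private_inner sh].
Proof.
move=> wt; case: q => [|b q] // _ eg; rewrite subt_cat eg /=.
case: sg {eg} (ctree_wf_subt wt eg) => [C _ e|C l r [_ _ wl wr] eh]; first by [].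
have shlr : cset sh \subset cset (if b then r else l).
  by case: b eh => eh; [exact: cset_subt wr eh | exact: cset_subt wl eh].
apply: disjointWr (subset_trans (private_inner_sub sh) (innerS shlr)) _.
rewrite /private_inner -setI_eq0; apply/eqP/setP => x.
rewrite in_setI in_setD in_setU in_set0.
by case: b {eh shlr}; case: (x \in inner A (cset l)); case: (x \in inner A (cset r));
  rewrite /= ?andbF.
Qed.

Lemma disjoint_private_inner t g h sg sh : ctree_wf t -> g != h ->
  subt t g = Some sg -> subt t h = Some sh ->
  [disjoint private_inner sg & private_inner sh].
Proof.
move=> wt ngh eg eh.
have sub_cset s : private_inner s \subset cset s.
  exact: subset_trans (private_inner_sub s) (inner_sub _).
case/or3P: (subt_prefix_or_disjoint wt eg eh) => [/prefixP [q e]|/prefixP [q e]|d].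
- rewrite e in eh; apply: (disjoint_private_inner_cat wt _ eg eh).
  by apply: contra ngh => /eqP q0; rewrite e q0 cats0.
- rewrite e in eg; rewrite disjoint_sym; apply: (disjoint_private_inner_cat wt _ eh eg).
  by apply: contra ngh => /eqP q0; rewrite e q0 cats0.
exact: disjointWl (sub_cset _) (disjointWr (sub_cset _) d).
Qed.

End ClusterTrees.

Section AugmentedTree.
Variable n : nat.
Implicit Types (a s : {set 'I_n}).

Lemma setC_split_disjoint a s : [disjoint a & s] ->
  ~: a = s :|: ~: (a :|: s) /\ [disjoint s & ~: (a :|: s)].
Proof.
move=> das; split.
  apply/setP => x; rewrite !inE; case xa: (x \in a); case xs: (x \in s) => //=.
  by rewrite (disjointFr das xa) in xs.
rewrite -setI_eq0; apply/eqP/setP => x; rewrite !inE.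
by case: (x \in s); rewrite ?andbF ?orbT.
Qed.

Lemma disjoint_cover_setC a s : [disjoint a & s] -> a :|: s = setT -> s = ~: a.
Proof.
move=> das e; apply/setP => x; rewrite !inE.
have := congr1 (fun X : {set 'I_n} => x \in X) e; rewrite !inE /=.
case xa: (x \in a); case xs: (x \in s) => //=.
by rewrite (disjointFr das xa) in xs.
Qed.

(* The invariant carried by the accumulator O of augT: it is a well-formed tree
   for the complement of the current cluster (nothing yet at the root of T). *)
Definition complement_tree (O : option (ctree n)) (C : {set 'I_n}) : Prop :=
  if O is Some o then ctree_wf o /\ cset o = ~: C else C = setT.

Lemma complement_tree_step (a s : ctree n) C O : ctree_wf s ->
  [disjoint cset a & cset s] -> C = cset a :|: cset s -> complement_tree O C ->
  complement_tree
    (Some (match O with None => s | Some o => CNode (~: cset a) s o end)) (cset a).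
Proof.
move=> ws das eC; case: O => [o [wo eo]|eT] /=.
  by rewrite eo eC; have [e1 e2] := setC_split_disjoint das.
by split => //; apply: disjoint_cover_setC das _; rewrite -eC.
Qed.

Lemma ctree_wf_augT (T : ctree n) p O tr : ctree_wf T ->
  complement_tree O (cset T) -> augT T p O = Some tr -> ctree_wf tr.
Proof.
elim: p T O => [|b p IH] T O.
  by case: T => [C|C l r] //= _; case: O => [o [wo _]|_] /= [<-].
case: T => [C|C l r] //= [eC dlr wl wr] hO.
case: b; apply: IH => //; apply: complement_tree_step => //.
- by rewrite disjoint_sym.
- by rewrite setUC -eC.
- by rewrite -eC.
Qed.

End AugmentedTree.

Section ClusterSets.
Variables (R : realFieldType) (n : nat) (A : 'M[R]_n) (tr : ctree n).
Hypothesis wf_tr : ctree_wf tr.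
Implicit Types (g h : seq bool).

Lemma clus_subt g s : subt tr g = Some s -> clus tr g = cset s.
Proof. by rewrite /clus => ->. Qed.

Lemma Sset_subt g s : subt tr g = Some s -> Sset A tr g = private_inner A s.
Proof. by rewrite SsetE => ->. Qed.

Lemma Sset_sub_inner g : Sset A tr g \subset inner A (clus tr g).
Proof.
by rewrite SsetE /clus; case: (subt tr g) => [s|]; [apply: private_inner_sub | apply: sub0set].
Qed.

Lemma Sset_sub_clus g : Sset A tr g \subset clus tr g.
Proof. exact: subset_trans (Sset_sub_inner g) (inner_sub _ _). Qed.

Lemma disjoint_Bset_Sset g : [disjoint Bset A tr g & Sset A tr g].
Proof. exact: disjointWr (Sset_sub_inner g) (disjoint_bnd_inner _ _). Qed.

Lemma disjoint_Sset g h : g != h -> [disjoint Sset A tr g & Sset A tr h].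
Proof.
move=> ngh; rewrite !SsetE.
case eg: (subt tr g) => [sg|]; last by rewrite -setI_eq0 set0I.
case eh: (subt tr h) => [sh|]; last by rewrite -setI_eq0 setI0.
exact: disjoint_private_inner wf_tr ngh eg eh.
Qed.

End ClusterSets.

Section Elimination.
Variables (R : realFieldType) (n : nat) (A : 'M[R]_n).
Variables (Tp : ctree n) (ord : seq (seq bool)).
Hypotheses (symA : symmetric_mx A) (pdA : posdef_mx A) (wfTp : ctree_wf Tp).
Hypothesis ordTp : consistent_ordering Tp ord.

Local Notation X t := (Acur A Tp ord t).
Local Notation node t := (nth [::] ord t).

Definition eliminated t : {set 'I_n} :=
  [set i | has (fun g => i \in Sset A Tp g) (take t ord)].
Local Notation live t := (~: eliminated t).

Definition inner_cols0 t := forall u, (t <= u < size ord)%N -> forall i j,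
  i \notin clus Tp (node u) -> j \in inner A (clus Tp (node u)) -> X t i j = 0.

Definition elim_invariant t :=
  [/\ reduced_rows A (live t) (X t), cross_block0 (live t) (X t) & inner_cols0 t].

Lemma uniq_ord : uniq ord.
Proof. by rewrite (perm_uniq ordTp.1) uniq_positions. Qed.

Lemma mem_ord g : (g \in ord) = isSome (subt Tp g).
Proof. by rewrite (perm_mem ordTp.1) mem_positions. Qed.

Lemma mem_ord_subt g : g \in ord -> exists s, subt Tp g = Some s.
Proof. by rewrite mem_ord; case: (subt Tp g) => // s _; exists s. Qed.

Lemma index_node t : (t < size ord)%N -> index (node t) ord = t.
Proof. by move=> lt; rewrite index_uniq // uniq_ord. Qed.

Lemma index_prefix g h : g \in ord -> h \in ord -> prefix g h -> g != h ->
  (index h ord < index g ord)%N.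
Proof. by rewrite !mem_ord -!mem_positions; exact: ordTp.2. Qed.

Lemma mem_take_ord t h : (h \in take t ord) = (h \in ord) && (index h ord < t)%N.
Proof.
case: (boolP (h \in ord)) => hin /=; first by rewrite in_take.
by apply/negP => /mem_take; rewrite (negbTE hin).
Qed.

Lemma eliminatedP t i : reflect (exists2 h, (h \in ord) && (index h ord < t)%N &
  i \in Sset A Tp h) (i \in eliminated t).
Proof.
rewrite inE; apply: (iffP hasP) => -[h hin iSh]; exists h => //.
  by rewrite -mem_take_ord.
by rewrite mem_take_ord.
Qed.

Lemma Acur_step t : (t < size ord)%N -> X t.+1 =
  invmx (elim_mx (Bset A Tp (node t)) (Sset A Tp (node t)) (X t)) *m X t.
Proof. by move=> lt; rewrite /Acur (take_nth [::] lt) foldl_rcons. Qed.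

Lemma live_step t : (t < size ord)%N -> live t.+1 = live t :\: Sset A Tp (node t).
Proof.
move=> lt; apply/setP => i.
by rewrite !inE (take_nth [::] lt) has_rcons negb_or andbC.
Qed.

Lemma elim_invariant0 : elim_invariant 0.
Proof.
have E0 : eliminated 0 = set0 by apply/setP => i; rewrite !inE take0.
rewrite /elim_invariant /inner_cols0 /Acur E0 setC0 take0 /=; split.
- by exists 1%:M; rewrite setprojT !mul1mx.
- by move=> i j _; rewrite inE.
move=> u _ i j iC; rewrite !inE negb_and => /andP [nAj jC].
rewrite jC /= in nAj; rewrite -symA mxE; apply/eqP; apply: contraNT nAj => Aji.
by apply/existsP; exists i; rewrite iC Aji.
Qed.

Section Step.
Variable t : nat.
Hypothesis lt_t : (t < size ord)%N.
Local Notation g := (node t).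
Local Notation B := (Bset A Tp g).
Local Notation S := (Sset A Tp g).

Let g_ord : g \in ord := mem_nth [::] lt_t.

Lemma Sset_node_live : S \subset live t.
Proof.
apply/subsetP => k kS; rewrite inE; apply/eliminatedP => -[h /andP [_ ih] kSh].
have ngh : g != h by apply: contraTneq ih => <-; rewrite index_node // ltnn.
by rewrite (disjointFr (disjoint_Sset A wfTp ngh) kS) in kSh.
Qed.

Lemma Bset_node_live : B \subset live t.
Proof.
have [sg eg] := mem_ord_subt g_ord.
apply/subsetP => k kB; rewrite inE; apply/eliminatedP => -[h /andP [hin ih] kSh].
have [sh eh] := mem_ord_subt hin.
have kSh' := subsetP (Sset_sub_inner A Tp h) k kSh.
rewrite /Bset (clus_subt eg) in kB; rewrite (clus_subt eh) in kSh'.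
case/or3P: (subt_prefix_or_disjoint wfTp eg eh) => [/prefixP [q e]|gh|d].
- move: eh; rewrite e subt_cat eg /= => eh.
  have shg := cset_subt (ctree_wf_subt wfTp eg) eh.
  have := subsetP (innerS A shg) k kSh'.
  by rewrite (disjointFr (disjoint_bnd_inner A _) kB).
- have ngh : h != g by apply: contraTneq ih => ->; rewrite index_node // ltnn.
  by have := ltn_trans (index_prefix hin g_ord gh ngh) ih; rewrite index_node // ltnn.
have kh := subsetP (inner_sub A _) k kSh'.
by rewrite (disjointFr d (subsetP (bnd_sub A _) k kB)) in kh.
Qed.

(* The rows of live t that meet the pivot columns S lie in S or B: any other row
   inside the cluster belongs to an inner node of a descendant, eliminated earlier. *)
Lemma live_pivot_cols0 : inner_cols0 t ->
  forall i j, i \in live t -> i \notin S -> i \notin B -> j \in S -> X t i j = 0.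
Proof.
move=> Xt0 i j iD iS iB jS.
have jI : j \in inner A (clus Tp g) := subsetP (Sset_sub_inner A Tp g) j jS.
case: (boolP (i \in clus Tp g)) => iC; last by apply: (Xt0 t _ i j iC jI); rewrite leqnn.
have [sg eg] := mem_ord_subt g_ord.
have iI : i \in inner A (cset sg) by rewrite in_setD -(clus_subt eg) iC andbT.
have [q [s' [e iS']]] := inner_private_subt iI.
have eh : subt Tp (g ++ q) = Some s' by rewrite subt_cat eg.
have nq : q != [::].
  apply: contraNneq iS => q0; move: e; rewrite q0 subt_nil => -[e].
  by rewrite (Sset_subt A eg) e.
have ngh : g != g ++ q.
  by apply: contra nq => /eqP /(congr1 size); rewrite size_cat -{1}[size g]addn0 =>
    /addnI /esym /size0nil ->.
have hin : g ++ q \in ord by rewrite mem_ord eh.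
have ih := index_prefix g_ord hin (prefix_prefix g q) ngh.
rewrite index_node // in ih.
move: iD; rewrite inE => /negP []; apply/eliminatedP; exists (g ++ q).
  by rewrite hin ih.
by rewrite (Sset_subt A eh).
Qed.

Lemma inner_cols0_step : inner_cols0 t -> inner_cols0 t.+1.
Proof.
move=> Xt0 v /andP [ltv lt_v] i j iC jI.
have v_ord : node v \in ord := mem_nth [::] lt_v.
have Xt0v i' : i' \notin clus Tp (node v) -> X t i' j = 0.
  by move=> i'C; apply: (Xt0 v) => //; rewrite (ltnW ltv) lt_v.
have dBS := disjoint_Bset_Sset A Tp g.
have [sg eg] := mem_ord_subt g_ord; have [sv ev] := mem_ord_subt v_ord.
rewrite Acur_step //.
case/or3P: (subt_prefix_or_disjoint wfTp eg ev) => [gv|/prefixP [q e]|d].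
- have ngv : g != node v.
    by apply: contraTneq ltv => e'; have := index_node lt_v; rewrite -e' index_node // => ->; rewrite ltnn.
  have := index_prefix g_ord v_ord gv ngv; rewrite !index_node // => lt_vt.
  by have := ltn_trans lt_vt ltv; rewrite ltnn.
- have eg' : subt sv q = Some sg by move: eg; rewrite e subt_cat ev.
  rewrite (elim_mulmx_row _ dBS); first exact: Xt0v.
  apply: contra iC => iB; rewrite (clus_subt ev).
  apply: (subsetP (cset_subt (ctree_wf_subt wfTp ev) eg')); rewrite -(clus_subt eg).
  exact: (subsetP (bnd_sub A _)) iB.
rewrite (elim_mulmx_col dBS) => [|k kS]; first exact: Xt0v.
apply: Xt0v; rewrite (clus_subt ev) (disjointFr d) //.
by rewrite -(clus_subt eg); apply: (subsetP (Sset_sub_clus A Tp g)).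
Qed.

Lemma elim_invariant_step : elim_invariant t -> elim_invariant t.+1.
Proof.
case=> red cb Xt0; have dBS := disjoint_Bset_Sset A Tp g.
have uSS : submxS S S (X t) \in unitmx.
  exact: posdef_unitmx (posdef_submxS_reduced pdA red cb Sset_node_live).
rewrite /elim_invariant live_step // Acur_step //; split.
- exact: reduced_rows_elim dBS Sset_node_live red.
- exact: cross_block0_elim dBS Sset_node_live cb (live_pivot_cols0 Xt0) uSS.
- exact: inner_cols0_step.
Qed.

Lemma posdef_Ug_node : elim_invariant t -> posdef_mx (Ug A Tp g (X t)).
Proof.
move=> /elim_invariant_step [red cb _]; have dBS := disjoint_Bset_Sset A Tp g.
rewrite /Ug -/(schur _ _ _) (schur_elim _ dBS) -Acur_step //.
apply: posdef_submxS_reduced pdA red cb _.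
rewrite live_step //; apply/subsetP => k kB.
by rewrite in_setD (subsetP Bset_node_live k kB) (disjointFr dBS kB).
Qed.

End Step.

Lemma elim_invariant_all t : (t <= size ord)%N -> elim_invariant t.
Proof.
elim: t => [|t IH] lt_t; first exact: elim_invariant0.
exact: elim_invariant_step lt_t (IH (ltnW lt_t)).
Qed.

End Elimination.

Theorem mainTheorem2 (R : realFieldType) (n : nat) (A : 'M[R]_n)
  (T : ctree n) (p : seq bool) (Tp : ctree n) (ord : seq (seq bool)) (t : nat) :
  symmetric_mx A -> posdef_mx A ->
  cluster_tree T ->
  augmented_tree T p = Some Tp ->
  consistent_ordering Tp ord ->
  (t < size ord)%N ->
  posdef_mx (Ug A Tp (nth [::] ord t) (Acur A Tp ord t)).
Proof.
move=> symA pdA [rootT wfT] augTp ordTp lt_t.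
have wfTp : ctree_wf Tp := ctree_wf_augT (O := None) wfT rootT augTp.
have inv_t := elim_invariant_all symA pdA wfTp ordTp (ltnW lt_t).
exact (posdef_Ug_node pdA wfTp ordTp lt_t inv_t).
Qed.
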